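(* Let $n\ge 1$ and let $G^n$ be the set of all $C^\infty$ diffeomorphisms $\mathbf{Y}:\mathbb{R}^n\setminus\{0\}\to\mathbb{R}^n\setminus\{0\}$ satisfying $\mathbf{Y}(\lambda\mathbf{x})=\lambda\mathbf{Y}(\mathbf{x})$ for all $\mathbf{x}\in\mathbb{R}^n\setminus\{0\}$ and all $\lambda\in\mathbb{R}\setminus\{0\}$; $G^n$ is a group under composition, where for $g_1,g_2\in G^n$ with associated maps $\mathbf{Y}_{g_1},\mathbf{Y}_{g_2}$ the product is defined by $\mathbf{Y}_{g_1g_2}=\mathbf{Y}_{g_1}\circ\mathbf{Y}_{g_2}$. Let $N^n\subset G^n$ be the subset of those elements $g$ whose map has the form $\mathbf{Y}_g(\mathbf{x})=\mathbf{x}\,r_g(\mathbf{x})$, where $r_g:\mathbb{R}^n\setminus\{0\}\to(0,\infty)$ is a $C^\infty$ function with $r_g(\lambda\mathbf{x})=r_g(\mathbf{x})$ for all $\lambda\in\mathbb{R}\setminus\{0\}$. Then $N^n$ is a normal abelian subgroup of $G^n$, and for all $g,g_1,g_2\in N^n$ and all $\mathbf{x}\in\mathbb{R}^n\setminus\{0\}$, $$r_{g_1g_2}(\mathbf{x})=r_{g_1}(\mathbf{x})\,r_{g_2}(\mathbf{x}),\qquad r_{g^{-1}}(\mathbf{x})=\frac{1}{r_g(\mathbf{x})}.$$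
   Context: $G^n$ is called the group of Thermodynamic Coordinate Transformations (TCT-group): homogeneous (degree one) diffeomorphisms of $\mathbb{R}^n\setminus\{0\}$. Elements $g$ of $G^n$ are identified with their maps $\mathbf{Y}_g$, and the group law is composition of maps. *)

From HB Require Import structures.
From mathcomp Require Import all_boot all_order all_algebra.
From mathcomp Require Import all_classical all_reals all_analysis.
Set Implicit Arguments. Unset Strict Implicit. Unset Printing Implicit Defensive.
Import Order.TTheory GRing.Theory Num.Theory.
Import numFieldNormedType.Exports.
Local Open Scope classical_set_scope.
Local Open Scope ring_scope.

Definition punct (R : realType) (n : nat) : set 'rV[R]_n := [set x | x != 0].

Fixpoint iderive (R : realType) (n : nat) (W : normedModType R)
    (vs : seq 'rV[R]_n) (f : 'rV[R]_n -> W) : 'rV[R]_n -> W :=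
  match vs with
  | [::] => f
  | v :: vs' => fun x => derive (iderive vs' f) x v
  end.

Definition smooth_on (R : realType) (n : nat) (W : normedModType R)
    (U : set 'rV[R]_n) (f : 'rV[R]_n -> W) : Prop :=
  forall (vs : seq 'rV[R]_n) (x : 'rV[R]_n), U x ->
    {for x, continuous (iderive vs f)} /\
    (forall v : 'rV[R]_n, derivable (iderive vs f) x v).

Definition smooth_inverse (R : realType) (n : nat)
    (Y Z : 'rV[R]_n -> 'rV[R]_n) : Prop :=
  (forall x, x != 0 -> Z x != 0) /\ smooth_on (@punct R n) Z /\
  (forall x, x != 0 -> Z (Y x) = x) /\ (forall x, x != 0 -> Y (Z x) = x).

(* Y represents an element of G^n (only its values on R^n \ {0} matter). *)
Definition inG (R : realType) (n : nat) (Y : 'rV[R]_n -> 'rV[R]_n) : Prop :=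
  (forall x, x != 0 -> Y x != 0) /\
  smooth_on (@punct R n) Y /\
  (exists Z, smooth_inverse Y Z) /\
  (forall (x : 'rV[R]_n) (l : R), x != 0 -> l != 0 -> Y (l *: x) = l *: Y x).

Definition inN_with (R : realType) (n : nat) (Y : 'rV[R]_n -> 'rV[R]_n)
    (r : 'rV[R]_n -> R) : Prop :=
  inG Y /\
  smooth_on (@punct R n) r /\
  (forall x, x != 0 -> 0 < r x) /\
  (forall (x : 'rV[R]_n) (l : R), x != 0 -> l != 0 -> r (l *: x) = r x) /\
  (forall x, x != 0 -> Y x = r x *: x).

Definition inN (R : realType) (n : nat) (Y : 'rV[R]_n -> 'rV[R]_n) : Prop :=
  exists r, inN_with Y r.

From HB Require Import structures.
From mathcomp Require Import all_boot all_order all_algebra.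
From mathcomp Require Import all_classical all_reals all_analysis.
Import Order.TTheory GRing.Theory Num.Theory.
Import numFieldNormedType.Exports.
Local Open Scope classical_set_scope.
Local Open Scope ring_scope.
Set Implicit Arguments. Unset Strict Implicit. Unset Printing Implicit Defensive.

(* Every element of N^n acts as x |-> r(x) x with r positive and invariant under
   nonzero scalings, so Y1 (Y2 x) = r1 (r2(x) x) r2(x) x = r1(x) r2(x) x:
   composition multiplies the r's, inversion inverts them, and N^n is abelian.
   For Y in G^n with inverse Z, homogeneity of Y gives
   Y (H (Z x)) = r (Z x) *: Y (Z x) = r (Z x) *: x, so N^n is normal.  The
   analytic content is that smooth functions are closed under products,
   reciprocals and composition; the chain rule needed for the latter rests on
   the classical fact that continuous partial derivatives imply
   differentiability, proved coordinate by coordinate with the mean value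
   theorem. *)

Section finite_order_smoothness.
Variables (R : realType) (n : nat).
Implicit Types (U : set 'rV[R]_n) (vs : seq 'rV[R]_n) (x v : 'rV[R]_n).

Lemma iderive_rcons (W : normedModType R) vs v (f : 'rV[R]_n -> W) :
  iderive (rcons vs v) f = iderive vs (fun x => 'D_v f x).
Proof. by elim: vs => [|w vs IH] //=; rewrite IH. Qed.

Lemma near_open U x : open U -> U x -> \forall y \near x, U y.
Proof. by move=> oU Ux; apply: open_nbhs_nbhs; split. Qed.

Lemma iderive_eq_on (W : normedModType R) U (F G : 'rV[R]_n -> W) :
  open U -> (forall x, U x -> F x = G x) ->
  forall vs x, U x -> iderive vs F x = iderive vs G x.
Proof.
move=> oU FG; elim=> [|v vs IH] x Ux /=; first exact: FG.
by apply: near_eq_derive; near=> y; apply: IH; near: y; apply: near_open.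
Unshelve. all: by end_near. Qed.

Definition Ck_on m U (f : 'rV[R]_n -> R) :=
  forall vs, (size vs <= m)%N -> forall x, U x ->
    {for x, continuous (iderive vs f)} /\
    (forall v, derivable (iderive vs f) x v).

Lemma smooth_onE U f : smooth_on U f <-> forall m, Ck_on m U f.
Proof.
split=> [sf m vs _ x Ux|sf vs x Ux]; first exact: sf.
exact: (sf (size vs) vs (leqnn _)).
Qed.

Lemma Ck_on0P U f :
  Ck_on 0 U f <-> forall x, U x -> {for x, continuous f} /\ forall v, derivable f x v.
Proof. by split=> [sf x Ux|sf [|//] _ x Ux]; [apply: (sf [::])|apply: sf]. Qed.

Lemma Ck_on_le m k U f : (k <= m)%N -> Ck_on m U f -> Ck_on k U f.
Proof. by move=> km sf vs hvs; apply: sf; apply: leq_trans km. Qed.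

Lemma Ck_onS m U f :
  Ck_on m.+1 U f <-> Ck_on 0 U f /\ forall v, Ck_on m U (fun x => 'D_v f x).
Proof.
split=> [sf|[s0 sD] vs].
  split=> [|v vs hvs x Ux]; first exact: Ck_on_le sf.
  by rewrite -iderive_rcons; apply: sf; rewrite ?size_rcons.
case/lastP: vs => [|vs v] hvs x Ux; first exact: s0.
by rewrite iderive_rcons; apply: sD; rewrite // -ltnS -(size_rcons vs v).
Qed.

Lemma Ck_on_eq m U (F G : 'rV[R]_n -> R) :
  open U -> Ck_on m U F -> (forall x, U x -> F x = G x) -> Ck_on m U G.
Proof.
move=> oU sF FG vs hvs x Ux; have [cF dF] := sF vs hvs x Ux.
have E : \forall y \near x, iderive vs F y = iderive vs G y.
  by near=> y; apply: (iderive_eq_on oU FG); near: y; apply: near_open.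
split=> [|v]; last exact: near_eq_derivable E (dF v).
apply: cvg_trans (near_eq_cvg E) _.
by rewrite -(iderive_eq_on oU FG).
Unshelve. all: by end_near. Qed.

Lemma Ck_on_derive m U f v :
  Ck_on m.+1 U f -> Ck_on m U (fun x => 'D_v f x).
Proof. by move=> /Ck_onS[_]; apply. Qed.

Lemma Ck_on_pt m U f x :
  Ck_on m U f -> U x -> {for x, continuous f} /\ forall v, derivable f x v.
Proof. by move=> sf; apply: (sf [::]). Qed.

Lemma Ck_onS_derive m U f (Df : 'rV[R]_n -> 'rV[R]_n -> R) : open U ->
  Ck_on 0 U f -> (forall v x, U x -> 'D_v f x = Df v x) ->
  (forall v, Ck_on m U (Df v)) -> Ck_on m.+1 U f.
Proof.
move=> oU f0 fD sD; apply/Ck_onS; split=> // v.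
by apply: Ck_on_eq oU (sD v) _ => x Ux; rewrite fD.
Qed.

Lemma Ck_on_cst m U (c : R) : Ck_on m U (fun _ => c).
Proof.
move=> vs _ x Ux.
have [d ->] : exists d : R, iderive vs (fun _ : 'rV[R]_n => c) = fun _ => d.
  elim: vs => [|v vs [d IH]] /=; first by exists c.
  by exists 0; apply/funext => y; rewrite IH derive_cst.
by split; [apply: cst_continuous | move=> v; apply: derivable_cst].
Qed.

Variable U : set 'rV[R]_n.
Hypothesis oU : open U.

Lemma Ck_on_add m (F G : 'rV[R]_n -> R) :
  Ck_on m U F -> Ck_on m U G -> Ck_on m U (fun x => F x + G x).
Proof.
have base k H K : Ck_on k U H -> Ck_on k U K -> Ck_on 0 U (fun x => H x + K x).
  move=> sH sK; apply/Ck_on0P => x Ux.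
  have [cH dH] := Ck_on_pt sH Ux; have [cK dK] := Ck_on_pt sK Ux.
  by split=> [|v]; [exact: cvgD cH cK | exact: derivableD].
elim: m F G => [|m IH] F G sF sG; first exact: base sF sG.
apply: (Ck_onS_derive (Df := fun v x => 'D_v F x + 'D_v G x)) => //.
- exact: base sF sG.
- move=> v x Ux; have [_ dF] := Ck_on_pt sF Ux; have [_ dG] := Ck_on_pt sG Ux.
  by rewrite deriveD.
- by move=> v; apply: IH; apply: Ck_on_derive.
Qed.

Lemma Ck_on_sum m k (F : 'I_k -> 'rV[R]_n -> R) :
  (forall i, Ck_on m U (F i)) -> Ck_on m U (fun x => \sum_(i < k) F i x).
Proof.
elim: k F => [|k IH] F sF.
  by apply: Ck_on_eq oU (Ck_on_cst 0) _ => x _; rewrite big_ord0.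
apply: Ck_on_eq oU (Ck_on_add (IH _ (fun i => sF (widen_ord (leqnSn k) i)))
  (sF ord_max)) _ => x _.
by rewrite big_ord_recr.
Qed.

Lemma Ck_on_mul m (F G : 'rV[R]_n -> R) :
  Ck_on m U F -> Ck_on m U G -> Ck_on m U (fun x => F x * G x).
Proof.
have base k H K : Ck_on k U H -> Ck_on k U K -> Ck_on 0 U (fun x => H x * K x).
  move=> sH sK; apply/Ck_on0P => x Ux.
  have [cH dH] := Ck_on_pt sH Ux; have [cK dK] := Ck_on_pt sK Ux.
  by split=> [|v]; [exact: cvgM cH cK | exact: derivableM].
elim: m F G => [|m IH] F G sF sG; first exact: base sF sG.
apply: (Ck_onS_derive (Df := fun v x => F x * 'D_v G x + G x * 'D_v F x)) => //.
- exact: base sF sG.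
- move=> v x Ux; have [_ dF] := Ck_on_pt sF Ux; have [_ dG] := Ck_on_pt sG Ux.
  by rewrite deriveM.
- have [sF' sG'] := (Ck_on_le (leqnSn m) sF, Ck_on_le (leqnSn m) sG).
  by move=> v; apply: Ck_on_add; apply: IH => //; apply: Ck_on_derive.
Qed.

Lemma Ck_on_inv m (F : 'rV[R]_n -> R) : (forall x, U x -> F x != 0) ->
  Ck_on m U F -> Ck_on m U (fun x => (F x)^-1).
Proof.
move=> F0; have base k H : (forall x, U x -> H x != 0) ->
    Ck_on k U H -> Ck_on 0 U (fun x => (H x)^-1).
  move=> H0 sH; apply/Ck_on0P => x Ux; have [cH dH] := Ck_on_pt sH Ux.
  by split=> [|v]; [exact: cvgV (H0 x Ux) cH | exact: derivableV (H0 x Ux) _].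
elim: m => [|m IH] sF; first exact: base F0 sF.
apply: (Ck_onS_derive
  (Df := fun v x => - 'D_v F x * ((F x)^-1 * (F x)^-1))) => //.
- exact: base F0 sF.
- move=> v x Ux; have [_ dF] := Ck_on_pt sF Ux.
  by rewrite deriveV ?F0 // -invfM -expr2 mulrC mulrN -mulNr.
- have sF' := Ck_on_le (leqnSn m) sF.
  move=> v; apply: Ck_on_mul; last by apply: Ck_on_mul; apply: IH.
  apply: Ck_on_eq oU (Ck_on_mul (Ck_on_cst (-1)) (Ck_on_derive v sF)) _.
  by move=> x _; rewrite mulN1r.
Qed.
End finite_order_smoothness.

Lemma normr_row_entry (R : realType) n (M : 'rV[R]_n) i : `|M 0 i| <= `|M|.
Proof.
rewrite [X in _ <= X]/Num.Def.normr/= mx_normrE.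
by apply: le_trans; last exact: (le_bigmax _ _ (0, i)).
Qed.

Lemma normr_row_le (R : realType) n (M : 'rV[R]_n) c :
  0 <= c -> (forall i, `|M 0 i| <= c) -> `|M| <= c.
Proof.
move=> c0 Mc; rewrite [X in X <= _]/Num.Def.normr/= mx_normrE.
by apply: bigmax_le => // -[i j] _ /=; rewrite (ord1 i); exact: Mc.
Qed.

Lemma MVT_centered (R : realType) (g dg : R -> R) (b : R) :
  (forall t : R, `|t| <= `|b| -> is_derive t 1 g (dg t)) ->
  exists2 c, `|c| <= `|b| & g b - g 0 = dg c * b.
Proof.
move=> gd; have seg a c : a <= c -> (forall t, a <= t <= c -> `|t| <= `|b|) ->
    exists2 t, `|t| <= `|b| & g c - g a = dg t * (c - a).
  move=> ac inb.
  have di t : t \in `]a, c[ -> is_derive t 1 g (dg t).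
    by rewrite in_itv /= => /andP[ta tc]; apply/gd/inb; rewrite !ltW.
  have gc : {within `[a, c], continuous g}.
    apply: derivable_within_continuous => t; rewrite in_itv /= => /inb tb.
    by have [] := gd t tb.
  have [t] := MVT_segment ac di gc; rewrite in_itv /= => /andP[ta tc] E.
  by exists t => //; apply: inb; rewrite ta tc.
case: (leP 0 b) => hb.
  have [t tb E] : exists2 t, `|t| <= `|b| & g b - g 0 = dg t * (b - 0).
    by apply: seg => // t /andP[t0 tb]; rewrite !ger0_norm // (le_trans t0).
  by exists t; rewrite // E subr0.
have [t tb E] : exists2 t, `|t| <= `|b| & g 0 - g b = dg t * (0 - b).
  apply: seg => [|t /andP[bt t0]]; first exact: ltW.
  by rewrite !ler0_norm ?lerN2 // ltW.
by exists t; rewrite // -opprB E sub0r mulrN opprK.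
Qed.

Lemma mvt_linear_error (R : realType) (g dg : R -> R) (b M eps : R) :
  (forall t : R, `|t| <= `|b| -> is_derive t 1 g (dg t)) ->
  (forall t, `|t| <= `|b| -> `|dg t - M| <= eps) ->
  `|g b - g 0 - b * M| <= `|b| * eps.
Proof.
move=> gd gM; have [c cb ->] := MVT_centered gd.
by rewrite mulrC -mulrBr normrM ler_wpM2l ?gM.
Qed.

Lemma is_derive_line (R : realType) n (f : 'rV[R]_n -> R) p e (t : R) :
  derivable f (p + t *: e) e ->
  is_derive t 1 (fun s : R => f (p + s *: e)) ('D_e f (p + t *: e)).
Proof.
move=> df.
have E : (fun h : R => h^-1 *: (((fun s : R => f (p + s *: e)) \o shift t) (h *: 1)
           - f (p + t *: e))) =
         (fun h : R => h^-1 *: ((f \o shift (p + t *: e)) (h *: e) - f (p + t *: e))).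
  apply/funext => h /=; congr (_ *: (f _ - _)).
  by rewrite [h *: 1]mulr1 scalerDl addrCA addrC.
by split; rewrite /derivable /derive E.
Qed.

Section continuous_partials.
Variables (R : realType) (n : nat).
Local Notation e i := (delta_mx 0 i : 'rV[R]_n).

Definition coord_path (x h : 'rV[R]_n) (k : nat) : 'rV[R]_n :=
  x + \row_j (if (j < k)%N then h 0 j else 0).

Section coordinate_path.
Variables x h : 'rV[R]_n.

Lemma coord_path0 : coord_path x h 0 = x.
Proof. by rewrite /coord_path (_ : \row_j _ = 0) ?addr0 //; apply/rowP => j; rewrite !mxE. Qed.

Lemma coord_path_end : coord_path x h n = x + h.
Proof. by congr (_ + _); apply/rowP => j; rewrite !mxE ltn_ord. Qed.

Lemma coord_pathS (i : 'I_n) :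
  coord_path x h i.+1 = coord_path x h i + h 0 i *: e i.
Proof.
rewrite /coord_path -addrA; congr (_ + _); apply/rowP => j; rewrite !mxE eqxx /=.
rewrite -val_eqE /=; have [ji|ij|/val_inj ->] := ltngtP j i.
- by rewrite ltnS (ltnW ji) mulr0 addr0.
- by rewrite ltnS leqNgt ij mulr0 addr0.
- by rewrite ltnSn mulr1 add0r.
Qed.

Lemma coord_path_dist (i : 'I_n) (t : R) : `|t| <= `|h 0 i| ->
  `|coord_path x h i + t *: e i - x| <= `|h|.
Proof.
move=> th; rewrite /coord_path addrAC (addrAC x) subrr add0r.
apply: normr_row_le => // j; rewrite !mxE /=.
have [->|_] := eqVneq j i; rewrite ?ltnn ?mulr1 ?mulr0 ?add0r.
  exact: le_trans th (normr_row_entry _ _).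
by case: ifP; rewrite ?addr0 ?normr0 ?normr_row_entry.
Qed.

Lemma partials_error_le (f : 'rV[R]_n -> R) (eps : R) : 0 <= eps ->
  (forall y, `|y - x| <= `|h| -> forall i,
     derivable f y (e i) /\ `|'D_(e i) f y - 'D_(e i) f x| <= eps) ->
  `|f (x + h) - f x - \sum_(i < n) h 0 i * 'D_(e i) f x| <= n%:R * (`|h| * eps).
Proof.
move=> eps0 near_x; pose P := coord_path x h.
have step (i : 'I_n) :
    `|f (P i.+1) - f (P i) - h 0 i * 'D_(e i) f x| <= `|h| * eps.
  have := @mvt_linear_error R (fun t => f (P i + t *: e i))
    (fun t => 'D_(e i) f (P i + t *: e i)) (h 0 i) ('D_(e i) f x) eps.
  rewrite scale0r addr0 -coord_pathS => le_err; apply: le_trans (le_err _ _) _.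
  - move=> t /coord_path_dist/near_x/(_ i)[di _]; exact: is_derive_line.
  - by move=> t /coord_path_dist/near_x/(_ i)[].
  - by rewrite ler_wpM2r ?normr_row_entry.
have -> : f (x + h) - f x - \sum_(i < n) h 0 i * 'D_(e i) f x =
    \sum_(i < n) (f (P i.+1) - f (P i) - h 0 i * 'D_(e i) f x).
  rewrite sumrB -(big_mkord xpredT (fun k => f (P k.+1) - f (P k))).
  by rewrite telescope_sumr // /P coord_path0 coord_path_end.
apply: le_trans (ler_norm_sum _ _ _) _.
apply: le_trans (ler_sum _ (fun i _ => step i)) _.
by rewrite sumr_const card_ord mulr_natl.
Qed.
End coordinate_path.

Lemma differentiable_partials (f : 'rV[R]_n -> R) x :
  (\forall y \near x, forall i, derivable f y (e i)) ->
  (forall i, {for x, continuous (fun y => 'D_(e i) f y)}) -> differentiable f x.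
Proof.
move=> df cf; pose L (h : 'rV[R]_n) : R := \sum_(i < n) h 0 i * 'D_(e i) f x.
have L_lin : linear L.
  move=> a u v; rewrite /L scaler_sumr -big_split /=; apply: eq_bigr => i _.
  by rewrite !mxE mulrDl -mulrA.
pose Ll : {linear 'rV[R]_n -> R} := HB.pack L (GRing.isLinear.Build _ _ _ _ L L_lin).
have Lc : continuous Ll.
  apply: continuous_big => //; first exact: add_continuous.
  move=> i _ y /=; exact: (cvgM (@coord_continuous R 1 n 0 i y) (cvg_cst _)).
suff E : f \o shift x = cst (f x) + (Ll : 'rV[R]_n -> R) +o_ (0 : 'rV[R]_n) id.
  by apply/diff_locallyP; rewrite (diff_unique Lc E).
apply/eqaddoP => eps eps0; pose eps' := eps / n.+1%:R.
have eps'0 : 0 < eps' by rewrite divr_gt0 // ltr0Sn.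
have : \forall y \near x, forall i,
    derivable f y (e i) /\ `|'D_(e i) f y - 'D_(e i) f x| <= eps'.
  near=> y; have di : forall i, derivable f y (e i) by near: y.
  move=> i; split => //; rewrite distrC; move: i; near: y.
  apply: filter_forall => i.
  exact: (cvgrPdist_le _ _).1 (cf i) _ eps'0.
move=> /nbhs_ballP[del del0 near_x]; apply/nbhs_ballP; exists del => // h.
rewrite -ball_normE /= sub0r normrN => hdel.
have near_h y : `|y - x| <= `|h| -> forall i,
    derivable f y (e i) /\ `|'D_(e i) f y - 'D_(e i) f x| <= eps'.
  move=> yx; apply: near_x; rewrite -ball_normE /= -normrN opprB.
  exact: le_lt_trans yx hdel.
have -> : (f \o shift x - (cst (f x) + Ll)) h = f (x + h) - f x - L h.
  change (f (h + x) - (f x + L h) = f (x + h) - f x - L h).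
  by rewrite [h + x]addrC opprD addrA.
apply: le_trans (partials_error_le (ltW eps'0) near_h) _.
rewrite mulrCA mulrC ler_wpM2r // /eps' mulrCA ler_piMr ?ltW //.
by rewrite ltr_pdivrMr ?ltr0Sn // mul1r ltr_nat.
Unshelve. all: by end_near. Qed.
End continuous_partials.

Section chain_rule.
Variables (R : realType) (n : nat).

Lemma derive_along_line (W : normedModType R) (F : 'rV[R]_n -> W) x v :
  'D_v F x = 'D_1 (fun t : R => F (t *: v + x)) 0.
Proof.
have E : (fun h : R => h^-1 *: ((F \o shift x) (h *: v) - F x)) =
  (fun h : R => h^-1 *: (((fun t : R => F (t *: v + x)) \o shift 0) (h *: 1)
     - (fun t : R => F (t *: v + x)) 0)).
  by apply/funext => h /=; rewrite [h *: 1]mulr1 addr0 scale0r add0r.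
by rewrite /derive E.
Qed.

Lemma derive_comp_differentiable (g : 'rV[R]_n -> R) (f : 'rV[R]_n -> 'rV[R]_n) x v :
  differentiable g (f x) -> derivable f x v ->
  derivable (g \o f) x v /\ 'D_v (g \o f) x = 'd g (f x) ('D_v f x).
Proof.
move=> dg /derivable1P /derivable1_diffP dline.
have dg' : differentiable g ((fun t : R => f (t *: v + x)) 0).
  by rewrite /= scale0r add0r.
have dc := differentiable_comp dline dg'.
split; first exact/derivable1P/derivable1_diffP.
rewrite derive_along_line [in RHS]derive_along_line (deriveE _ dc) (deriveE _ dline).
by rewrite (diff_comp dline dg') /= scale0r add0r.
Qed.

Lemma diff_row_partials (g : 'rV[R]_n -> R) y w : differentiable g y ->
  'd g y w = \sum_(i < n) w 0 i * 'D_(delta_mx 0 i) g y.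
Proof.
move=> dg; rewrite [in LHS](row_sum_delta w) linear_sum; apply: eq_bigr => i _.
by rewrite linearZ deriveE.
Qed.

Lemma derive_row_entry (f : 'rV[R]_n -> 'rV[R]_n) x v j :
  derivable f x v -> ('D_v f x) 0 j = 'D_v (fun y => f y 0 j) x.
Proof. by move=> df; rewrite derive_mx // mxE. Qed.

Lemma continuous_row (T : topologicalType) (F : T -> 'rV[R]_n) x :
  (forall j, {for x, continuous (fun y => F y 0 j)}) -> {for x, continuous F}.
Proof.
move=> cF; apply/cvgrPdist_le => eps eps0.
near=> y; apply: normr_row_le (ltW eps0) _ => j; rewrite !mxE.
move: j; near: y; apply: filter_forall => j.
exact: (cvgrPdist_le _ _).1 (cF j) _ eps0.
Unshelve. all: by end_near. Qed.

Lemma smooth_on_derive (W : normedModType R) (U : set 'rV[R]_n)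
  (g : 'rV[R]_n -> W) v : smooth_on U g -> smooth_on U (fun x => 'D_v g x).
Proof. by move=> sg vs x Ux; rewrite -iderive_rcons; exact: sg. Qed.

Lemma Ck_on1_differentiable (U : set 'rV[R]_n) (g : 'rV[R]_n -> R) y :
  open U -> Ck_on 1%N U g -> U y -> differentiable g y.
Proof.
move=> oU sg Uy; apply: differentiable_partials => [|i].
  near=> z; suff Uz : U z by move=> i; exact: (Ck_on_pt sg Uz).2.
  by near: z; apply: near_open.
exact: (sg [:: delta_mx 0 i] (leqnn _) y Uy).1.
Unshelve. all: by end_near. Qed.

Lemma iderive_row_entry (U : set 'rV[R]_n) (F : 'rV[R]_n -> 'rV[R]_n) : open U ->
  (forall vs, (forall y, U y -> forall j,
      iderive vs F y 0 j = iderive vs (fun z => F z 0 j) y) ->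
    forall y v, U y -> derivable (iderive vs F) y v) ->
  forall vs y, U y -> forall j,
    iderive vs F y 0 j = iderive vs (fun z => F z 0 j) y.
Proof.
move=> oU dF; elim=> [|v vs IH] y Uy j //=.
rewrite derive_row_entry; last exact: dF.
by apply: near_eq_derive; near=> z; apply: IH; near: z; apply: near_open.
Unshelve. all: by end_near. Qed.

Lemma smooth_rowP (U : set 'rV[R]_n) (F : 'rV[R]_n -> 'rV[R]_n) : open U ->
  smooth_on U F <-> forall j, smooth_on U (fun x => F x 0 j).
Proof.
move=> oU; split=> [sF j vs x Ux|sF].
  have E := iderive_row_entry oU (fun vs' _ y v Uy => (sF vs' y Uy).2 v).
  have NE : \forall z \near x, iderive vs F z 0 j = iderive vs (fun z => F z 0 j) z.
    by near=> z; apply: E; near: z; apply: near_open.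
  split=> [|v]; last first.
    exact: near_eq_derivable NE ((derivable_mxP _ _ _).1 ((sF vs x Ux).2 v) 0 j).
  apply: cvg_trans (near_eq_cvg NE) _; rewrite -(E vs x Ux j).
  exact: continuous_comp (sF vs x Ux).1 (@coord_continuous R 1 n 0 j _).
have dF vs : (forall y, U y -> forall j,
      iderive vs F y 0 j = iderive vs (fun z => F z 0 j) y) ->
    forall y v, U y -> derivable (iderive vs F) y v.
  move=> E y v Uy; apply/derivable_mxP => i j; rewrite (ord1 i).
  apply: near_eq_derivable _ ((sF j vs y Uy).2 v).
  by near=> z; apply/esym/E; near: z; apply: near_open.
have E := iderive_row_entry oU dF.
move=> vs x Ux; split=> [|v]; last by apply: dF => //; exact: E.
apply: continuous_row => j.
have NE : \forall z \near x, iderive vs (fun z => F z 0 j) z = iderive vs F z 0 j.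
  by near=> z; apply/esym/E; near: z; apply: near_open.
apply: cvg_trans (near_eq_cvg NE) _; rewrite (E vs x Ux j).
exact: (sF j vs x Ux).1.
Unshelve. all: by end_near. Qed.

Section composition.
Variables (U V : set 'rV[R]_n) (f : 'rV[R]_n -> 'rV[R]_n).
Hypotheses (oU : open U) (oV : open V) (fUV : forall x, U x -> V (f x)).
Hypothesis sf : smooth_on U f.

Lemma Ck_on_comp m (g : 'rV[R]_n -> R) : smooth_on V g -> Ck_on m U (g \o f).
Proof.
have cf x : U x -> {for x, continuous f} by move=> Ux; case: (sf [::] Ux).
have df x v : U x -> derivable f x v by move=> Ux; case: (sf [::] Ux).
have dg (h : 'rV[R]_n -> R) x : smooth_on V h -> U x -> differentiable h (f x).
  by move=> sh Ux; exact: Ck_on1_differentiable oV ((smooth_onE V h).1 sh 1%N) (fUV Ux).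
have base h : smooth_on V h -> Ck_on 0 U (h \o f).
  move=> sh; apply/Ck_on0P => x Ux; split=> [|v].
    exact: continuous_comp (cf x Ux) (differentiable_continuous (dg h x sh Ux)).
  exact: (derive_comp_differentiable (dg h x sh Ux) (df x v Ux)).1.
elim: m g => [|m IH] g sg; first exact: base.
apply: (Ck_onS_derive (Df := fun v x =>
  \sum_(i < n) ('D_v f x) 0 i * 'D_(delta_mx 0 i) g (f x))).
- exact: oU.
- exact: base.
- move=> v x Ux; have [_ ->] := derive_comp_differentiable (dg g x sg Ux) (df x v Ux).
  by rewrite diff_row_partials //; apply: dg.
- move=> v; apply: Ck_on_sum => // i; apply: Ck_on_mul => //.
    apply: (smooth_onE _ _).1; apply: (smooth_rowP _ oU).1.
    exact: smooth_on_derive.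
  exact: IH (smooth_on_derive _ sg).
Qed.
End composition.
End chain_rule.

Section smooth_closure.
Variables (R : realType) (n : nat).
Implicit Types (U V : set 'rV[R]_n) (F G : 'rV[R]_n -> R).

Lemma smooth_cst U (c : R) : smooth_on U (fun _ => c).
Proof. by apply/smooth_onE => m; apply: Ck_on_cst. Qed.

Lemma smooth_mul U F G : open U -> smooth_on U F -> smooth_on U G ->
  smooth_on U (fun x => F x * G x).
Proof.
move=> oU /smooth_onE sF /smooth_onE sG; apply/smooth_onE => m.
exact: Ck_on_mul.
Qed.

Lemma smooth_inv U F : open U -> (forall x, U x -> F x != 0) -> smooth_on U F ->
  smooth_on U (fun x => (F x)^-1).
Proof.
move=> oU F0 /smooth_onE sF; apply/smooth_onE => m.
exact: Ck_on_inv.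
Qed.

Lemma smooth_comp U V (f : 'rV[R]_n -> 'rV[R]_n) G : open U -> open V ->
  (forall x, U x -> V (f x)) -> smooth_on U f -> smooth_on V G ->
  smooth_on U (G \o f).
Proof. by move=> oU oV fUV sf sG; apply/smooth_onE => m; exact: Ck_on_comp sG. Qed.

Lemma smooth_comp_row U V (f g : 'rV[R]_n -> 'rV[R]_n) : open U -> open V ->
  (forall x, U x -> V (f x)) -> smooth_on U f -> smooth_on V g ->
  smooth_on U (g \o f).
Proof.
move=> oU oV fUV sf /(smooth_rowP _ oV) sg; apply/(smooth_rowP _ oU) => j.
exact: (smooth_comp oU oV fUV sf (sg j)).
Qed.

Lemma smooth_entry U j : smooth_on U (fun x : 'rV[R]_n => x 0 j).
Proof.
have d_entry x v : derivable (fun y : 'rV[R]_n => y 0 j) x v.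
  exact: (derivable_mxP _ _ _).1 (@derivable_id _ _ x v) 0 j.
have base : Ck_on 0 U (fun x : 'rV[R]_n => x 0 j).
  by apply/Ck_on0P => x _; split; [apply: (@coord_continuous R 1 n 0 j x)|].
apply/smooth_onE => -[//|m]; apply/Ck_onS; split=> // v.
have -> : (fun x => 'D_v (fun y : 'rV[R]_n => y 0 j) x) = fun _ => v 0 j.
  by apply/funext => x; rewrite -derive_row_entry ?derive_id.
exact: Ck_on_cst.
Qed.

Lemma smooth_id U : open U -> smooth_on U (@id 'rV[R]_n).
Proof. by move=> oU; apply/(smooth_rowP _ oU) => j; apply: smooth_entry. Qed.

Lemma open_punct : open (@punct R n).
Proof.
have -> : @punct R n = ~` [set 0].
  by apply/seteqP; split => x /=; rewrite /punct /=; move/eqP.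
apply: closed_openC; apply: accessible_closed_set1; apply: hausdorff_accessible.
exact: norm_hausdorff.
Qed.
End smooth_closure.

Lemma scaler_injl (F : fieldType) (V : lmodType F) (v : V) :
  v != 0 -> injective (fun a : F => a *: v).
Proof.
move=> v0 a b /eqP; rewrite -subr_eq0 -scalerBl scaler_eq0 (negbTE v0) orbF.
by rewrite subr_eq0 => /eqP.
Qed.

Section homogeneous_diffeomorphisms.
Variables (R : realType) (n : nat).
Implicit Types (Y Z H : 'rV[R]_n -> 'rV[R]_n) (r : 'rV[R]_n -> R).
Let oP := @open_punct R n.

Lemma inG_id : inG (@id 'rV[R]_n).
Proof.
have sid := smooth_id oP.
by split=> //; split=> //; split=> //; exists id.
Qed.

Lemma smooth_inverse_sym Y Z : inG Y -> smooth_inverse Y Z -> smooth_inverse Z Y.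
Proof. by move=> [Y0 [sY _]] [_ [_ [ZY YZ]]]. Qed.

Lemma inG_inverse Y Z : inG Y -> smooth_inverse Y Z -> inG Z.
Proof.
move=> GY iYZ; have [Y0 [_ [_ hY]]] := GY; have [Z0 [sZ [ZY YZ]]] := iYZ.
split=> //; split=> //; split; first by exists Y; apply: smooth_inverse_sym.
move=> x l x0 l0; have Zx0 := Z0 x x0.
by rewrite -[in LHS](YZ x x0) -hY // ZY // scaler_eq0 negb_or l0.
Qed.

Lemma inG_comp Y1 Y2 : inG Y1 -> inG Y2 -> inG (Y1 \o Y2).
Proof.
move=> [Y10 [sY1 [[Z1 [Z10 [sZ1 [ZY1 YZ1]]]] hY1]]].
move=> [Y20 [sY2 [[Z2 [Z20 [sZ2 [ZY2 YZ2]]]] hY2]]].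
split=> [x x0|]; first by apply/Y10/Y20.
split; first exact: smooth_comp_row oP oP Y20 sY2 sY1.
split=> [|x l x0 l0 /=]; last by rewrite hY2 // hY1 // Y20.
exists (Z2 \o Z1); split=> [x x0|]; first by apply/Z20/Z10.
split; first exact: smooth_comp_row oP oP Z10 sZ1 sZ2.
by split=> x x0 /=; [rewrite ZY1 ?ZY2 ?Y20 | rewrite YZ2 ?YZ1 ?Z10].
Qed.

Lemma inN_with_id : inN_with (@id 'rV[R]_n) (fun _ => 1).
Proof.
split; first exact: inG_id.
split; first exact: smooth_cst.
by split=> [x _|]; [exact: ltr01 | split=> // x _; rewrite scale1r].
Qed.

Lemma inN_with_unique Y r r' x : inN_with Y r -> inN_with Y r' -> x != 0 ->
  r' x = r x.
Proof.
move=> [_ [_ [_ [_ Yr]]]] [_ [_ [_ [_ Yr']]]] x0.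
by apply: (scaler_injl x0); rewrite /= -Yr' -?Yr.
Qed.

Lemma inN_with_compE Y1 Y2 r1 r2 x : inN_with Y1 r1 -> inN_with Y2 r2 -> x != 0 ->
  Y1 (Y2 x) = (r1 x * r2 x) *: x.
Proof.
move=> [_ [_ [_ [hr1 Y1r]]]] [_ [_ [pr2 [_ Y2r]]]] x0.
have r20 : r2 x != 0 by rewrite gt_eqF ?pr2.
by rewrite Y2r // Y1r ?scaler_eq0 ?negb_or ?r20 // hr1 // scalerA.
Qed.

Lemma inN_with_comp Y1 Y2 r1 r2 : inN_with Y1 r1 -> inN_with Y2 r2 ->
  inN_with (Y1 \o Y2) (fun x => r1 x * r2 x).
Proof.
move=> N1 N2; have [G1 [sr1 [pr1 [hr1 _]]]] := N1; have [G2 [sr2 [pr2 [hr2 _]]]] := N2.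
split; first exact: inG_comp.
split; first exact: smooth_mul oP sr1 sr2.
split=> [x x0|]; first by rewrite mulr_gt0 ?pr1 ?pr2.
split=> [x l x0 l0|x x0]; first by rewrite hr1 ?hr2.
exact: inN_with_compE N1 N2 x0.
Qed.

Lemma inN_with_inverseE Y Z r x : inN_with Y r -> smooth_inverse Y Z -> x != 0 ->
  Z x = (r x)^-1 *: x.
Proof.
move=> [_ [_ [pr [hr Yr]]]] [Z0 [_ [_ YZ]]] x0.
have Zx0 := Z0 x x0; have rZ0 : r (Z x) != 0 by rewrite gt_eqF ?pr.
have E : x = r (Z x) *: Z x by rewrite -Yr // YZ.
by rewrite {2 3}E hr // scalerA mulVf // scale1r.
Qed.

Lemma inN_with_inverse Y Z r : inN_with Y r -> smooth_inverse Y Z ->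
  inN_with Z (fun x => (r x)^-1).
Proof.
move=> NY iYZ; have [GY [sr [pr [hr _]]]] := NY.
split; first exact: inG_inverse GY iYZ.
split; first by apply: smooth_inv oP _ sr => x x0; rewrite gt_eqF ?pr.
split=> [x x0|]; first by rewrite invr_gt0 pr.
split=> [x l x0 l0|x x0]; first by rewrite hr.
exact: inN_with_inverseE NY iYZ x0.
Qed.

Lemma inN_with_conj Y Z H r : inG Y -> smooth_inverse Y Z -> inN_with H r ->
  inN_with (Y \o H \o Z) (r \o Z).
Proof.
move=> GY iYZ [GH [sr [pr [hr Hr]]]].
have GZ := inG_inverse GY iYZ; have [Z0 [sZ [_ hZ]]] := GZ.
have [_ [_ [_ hY]]] := GY; have [_ [_ [_ YZ]]] := iYZ.
split; first exact: inG_comp (inG_comp GY GH) GZ.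
split; first exact: smooth_comp oP oP Z0 sZ sr.
split=> [x x0|]; first exact/pr/Z0.
split=> [x l x0 l0 /=|x x0 /=]; have Zx0 := Z0 x x0; first by rewrite hZ // hr.
by rewrite Hr // hY ?YZ // gt_eqF ?pr.
Qed.

Lemma inN_commute H1 H2 x : inN H1 -> inN H2 -> x != 0 -> H1 (H2 x) = H2 (H1 x).
Proof.
move=> [r1 N1] [r2 N2] x0.
by rewrite (inN_with_compE N1 N2 x0) (inN_with_compE N2 N1 x0) mulrC.
Qed.
End homogeneous_diffeomorphisms.

Theorem proposition1 (R : realType) (n : nat) (hn : (0 < n)%N) :
  (* N^n contains the identity *)
  inN (@id 'rV[R]_n) /\
  (* closed under products, with r_{g1 g2} = r_{g1} r_{g2} *)
  (forall (Y1 Y2 : 'rV[R]_n -> 'rV[R]_n) (r1 r2 : 'rV[R]_n -> R),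
     inN_with Y1 r1 -> inN_with Y2 r2 ->
     inN (Y1 \o Y2) /\
     (forall r12, inN_with (Y1 \o Y2) r12 ->
        forall x, x != 0 -> r12 x = r1 x * r2 x)) /\
  (* closed under inverses, with r_{g^-1} = 1 / r_g *)
  (forall (Y Z : 'rV[R]_n -> 'rV[R]_n) (r : 'rV[R]_n -> R),
     inN_with Y r -> smooth_inverse Y Z ->
     inN Z /\
     (forall rZ, inN_with Z rZ -> forall x, x != 0 -> rZ x = 1 / r x)) /\
  (* normal in G^n *)
  (forall (Y Z H : 'rV[R]_n -> 'rV[R]_n),
     inG Y -> smooth_inverse Y Z -> inN H -> inN (Y \o H \o Z)) /\
  (* abelian *)
  (forall (H1 H2 : 'rV[R]_n -> 'rV[R]_n), inN H1 -> inN H2 ->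
     forall x, x != 0 -> H1 (H2 x) = H2 (H1 x)).
Proof.
split; first by exists (fun _ => 1); exact: inN_with_id.
split.
  move=> Y1 Y2 r1 r2 N1 N2; have N12 := inN_with_comp N1 N2.
  split=> [|r12 N12' x x0]; first by exists (fun x => r1 x * r2 x).
  exact: inN_with_unique N12 N12' x0.
split.
  move=> Y Z r NY iYZ; have NZ := inN_with_inverse NY iYZ.
  split=> [|rZ NZ' x x0]; first by exists (fun x => (r x)^-1).
  by rewrite div1r; exact: inN_with_unique NZ NZ' x0.
split; first by move=> Y Z H GY iYZ [r NH]; exists (r \o Z); exact: inN_with_conj.
move=> H1 H2 N1 N2 x x0; exact: inN_commute N1 N2 x0.
Qed.
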